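(* Fix numbers $\alpha,\beta,\hat\alpha,\hat\beta>0$, and suppose it is not the case that both $\hat\beta\ge\beta$ and $\frac{\alpha}{\beta}\ge\frac{\hat\alpha}{\hat\beta}$. Then there exist a state-independent utility function $u\colon\mathbb{R}\to\mathbb{R}$ that is strictly increasing and weakly concave, a belief $\mu\in[0,1]$, and a nondegenerate interval $[\underline w,\overline w]\subset\mathbb{R}$ such that for every $w\in[\underline w,\overline w]$, $$\mu u(w+\hat\alpha)+(1-\mu)u(w-\hat\beta)\ >\ u(w)\ \ge\ \mu u(w+\alpha)+(1-\mu)u(w-\beta),$$ i.e. $\hat r\succ s\succeq r$ at every wealth in $[\underline w,\overline w]$.
   Context: Setting: two states $\{0,1\}$, belief $\mu=\mathbb{P}(\text{state }1)$. At wealth $w$, the safe action $s$ pays $0$ in both states; the risky action $r$ pays $\alpha$ in state $1$ and $-\beta$ in state $0$; the risky action $\hat r$ pays $\hat\alpha$ in state $1$ and $-\hat\beta$ in state $0$. A subjective expected utility maximizer with utility $u$ of terminal wealth ranks actions by expected utility of $w$ plus the payoff; $\succ$ denotes strict and $\succeq$ weak preference. *)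

From Stdlib Require Import Reals.
Open Scope R_scope.

Definition strictly_increasing (u : R -> R) : Prop :=
  forall x y, x < y -> u x < u y.

Definition weakly_concave (u : R -> R) : Prop :=
  forall x y t, 0 <= t <= 1 ->
    t * u x + (1 - t) * u y <= u (t * x + (1 - t) * y).

Definition EU (u : R -> R) (mu w a b : R) : R :=
  mu * u (w + a) + (1 - mu) * u (w - b).

From Stdlib Require Import Reals Lra Psatz.
Open Scope R_scope.

(* If [betah < beta], put a concave kink between the two losses [w - beta]
   and [w - betah]: utility is linear above the kink, so a belief under which
   [rhat] has positive expected value makes it strictly attractive, while a
   steep enough slope below the kink makes the loss of [r] outweigh its gain.
   Otherwise [alpha / beta < alphah / betah], and a risk-neutral agent whose
   belief makes [r] fair strictly prefers [rhat]. *)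

Definition rhat_s_r_witness (alpha beta alphah betah : R) : Prop :=
  exists (u : R -> R) (mu wl wu : R),
    strictly_increasing u /\ weakly_concave u /\
    0 <= mu <= 1 /\ wl < wu /\
    forall w, wl <= w <= wu ->
      EU u mu w alphah betah > u w /\ u w >= EU u mu w alpha beta.

Lemma EU_id (mu w a b : R) :
  EU (fun x => x) mu w a b = w + (mu * a - (1 - mu) * b).
Proof. unfold EU; ring. Qed.

Lemma linear_witness (alpha beta alphah betah : R) :
  0 < alpha -> 0 < beta -> alpha * betah < alphah * beta ->
  rhat_s_r_witness alpha beta alphah betah.
Proof.
  intros Ha Hb Hratio.
  set (mu := beta / (alpha + beta)).
  assert (Hmu : mu * (alpha + beta) = beta) by (unfold mu; field; lra).
  assert (Hmu0 : 0 < mu) by (unfold mu; apply Rdiv_lt_0_compat; lra).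
  assert (Hmu1 : mu < 1) by nra.
  exists (fun x => x), mu, 0, 1.
  split; [intros x y Hxy; exact Hxy |].
  split; [intros x y t _; apply Rle_refl |].
  split; [lra |]. split; [lra |].
  intros w _; rewrite !EU_id.
  assert (Hfair : mu * alpha - (1 - mu) * beta = 0) by lra.
  assert (Hgain : 0 < mu * alphah - (1 - mu) * betah).
  { apply (Rmult_lt_reg_r (alpha + beta)); [lra |].
    replace ((mu * alphah - (1 - mu) * betah) * (alpha + beta))
      with (alphah * beta - alpha * betah) by (unfold mu; field; lra).
    lra. }
  lra.
Qed.

Definition kinked (M c x : R) : R := x + M * Rmin 0 (x - c).

Lemma kinked_strictly_increasing (M c : R) :
  0 <= M -> strictly_increasing (kinked M c).
Proof.
  intros HM x y Hxy; unfold kinked, Rmin.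
  destruct (Rle_dec 0 (x - c)), (Rle_dec 0 (y - c)); nra.
Qed.

Lemma kinked_weakly_concave (M c : R) :
  0 <= M -> weakly_concave (kinked M c).
Proof.
  intros HM x y t Ht; unfold kinked.
  assert (Hmin : t * Rmin 0 (x - c) + (1 - t) * Rmin 0 (y - c)
                 <= Rmin 0 (t * x + (1 - t) * y - c)).
  { unfold Rmin.
    destruct (Rle_dec 0 (x - c)), (Rle_dec 0 (y - c)),
             (Rle_dec 0 (t * x + (1 - t) * y - c)); nra. }
  nra.
Qed.

Lemma kinked_above (M c x : R) : c <= x -> kinked M c x = x.
Proof. intros Hx; unfold kinked; rewrite Rmin_left; lra. Qed.

Lemma kinked_below (M c x : R) : x <= c -> kinked M c x = x + M * (x - c).
Proof. intros Hx; unfold kinked; rewrite Rmin_right; lra. Qed.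

Lemma EU_kinked_above (M c mu w a b : R) :
  0 <= a -> 0 <= b -> c <= w - b ->
  EU (kinked M c) mu w a b = kinked M c w + (mu * a - (1 - mu) * b).
Proof.
  intros Ha Hb Hw; unfold EU.
  rewrite !kinked_above by lra; ring.
Qed.

Lemma EU_kinked_below (M c mu w a b d : R) :
  0 <= M -> 0 <= mu <= 1 -> 0 <= a -> 0 <= d -> c <= w -> w - b <= c - d ->
  EU (kinked M c) mu w a b
  <= kinked M c w + (mu * a - (1 - mu) * b) - (1 - mu) * M * d.
Proof.
  intros HM Hmu Ha Hd Hw Hwb; unfold EU.
  rewrite (kinked_below M c (w - b)), !kinked_above by lra.
  assert (Hslope : 0 <= (1 - mu) * M) by nra.
  nra.
Qed.

Lemma kinked_witness (alpha beta alphah betah : R) :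
  0 < alpha -> 0 < alphah -> 0 < betah -> betah < beta ->
  rhat_s_r_witness alpha beta alphah betah.
Proof.
  intros Ha Hah Hbh Hbb.
  set (mu := (alphah + 2 * betah) / (2 * (alphah + betah))).
  assert (Hmu1 : 1 - mu = alphah / (2 * (alphah + betah))) by (unfold mu; field; lra).
  assert (Hgain : mu * alphah - (1 - mu) * betah = alphah / 2)
    by (rewrite Hmu1; unfold mu; field; lra).
  assert (Hmu1_pos : 0 < 1 - mu) by (rewrite Hmu1; apply Rdiv_lt_0_compat; lra).
  assert (Hmu_pos : 0 < mu) by (unfold mu; apply Rdiv_lt_0_compat; lra).
  set (d := (beta - betah) / 2).
  set (M := mu * alpha / ((1 - mu) * d)).
  assert (Hd : 0 < d) by (unfold d; lra).
  assert (HMd : (1 - mu) * M * d = mu * alpha) by (unfold M; field; lra).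
  assert (HM : 0 <= M) by (unfold M; apply Rlt_le, Rdiv_lt_0_compat; nra).
  exists (kinked M 0), mu, betah, (betah + d).
  split; [exact (kinked_strictly_increasing M 0 HM) |].
  split; [exact (kinked_weakly_concave M 0 HM) |].
  split; [lra |]. split; [lra |].
  intros w Hw; split.
  - rewrite EU_kinked_above by lra; lra.
  - assert (Hmid : betah + d = beta - d) by (unfold d; lra).
    assert (Hloss : EU (kinked M 0) mu w alpha beta
                    <= kinked M 0 w + (mu * alpha - (1 - mu) * beta) - (1 - mu) * M * d)
      by (apply EU_kinked_below; lra).
    nra.
Qed.

Theorem mainTheorem2 (alpha beta alphah betah : R) :
  0 < alpha -> 0 < beta -> 0 < alphah -> 0 < betah ->
  ~ (betah >= beta /\ alpha / beta >= alphah / betah) ->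
  exists (u : R -> R) (mu wl wu : R),
    strictly_increasing u /\ weakly_concave u /\
    0 <= mu <= 1 /\ wl < wu /\
    forall w, wl <= w <= wu ->
      EU u mu w alphah betah > u w /\ u w >= EU u mu w alpha beta.
Proof.
  intros Ha Hb Hah Hbh Hnot.
  destruct (Rlt_or_le betah beta) as [Hlt | Hge].
  - exact (kinked_witness alpha beta alphah betah Ha Hah Hbh Hlt).
  - apply linear_witness; try assumption.
    assert (Hdiv : alpha / beta < alphah / betah).
    { apply Rnot_ge_lt; intros Hdiv; apply Hnot; split; lra. }
    replace (alpha * betah) with (alpha / beta * (beta * betah)) by (field; lra).
    replace (alphah * beta) with (alphah / betah * (beta * betah)) by (field; lra).
    apply Rmult_lt_compat_r; nra.
Qed.
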